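(* Let $u\in V$ and let $t\le\lceil\frac{n-\kappa}{2}\rceil$ be a positive integer. If there exists a $\kappa$-cut $U$ with $u\notin U$ and $|\mathrm{Side}_U(u)|\le t$, then there is a unique such $\kappa$-cut, denoted $\mathrm{Small}_t(u)$, with $u\notin\mathrm{Small}_t(u)$, $|\mathrm{Side}_{\mathrm{Small}_t(u)}(u)|\le t$, and $\mathrm{Side}_{\mathrm{Small}_t(u)}(u)\subseteq\mathrm{Side}_U(u)$ for every $\kappa$-cut $U$ with $u\notin U$ and $|\mathrm{Side}_U(u)|\le t$.
   Context: $G=(V,E)$ is a finite, simple, connected, undirected, non-complete graph with $n=|V|$; $\kappa$ is its vertex connectivity, assumed $\kappa<n/4$. A cut is a set $U\subset V$ whose removal disconnects $G$; a $\kappa$-cut is a cut of size $\kappa$; a side of $U$ is a connected component of the subgraph induced on $V\setminus U$; for $x\notin U$, $\mathrm{Side}_U(x)$ is the side of $U$ containing $x$. *)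

From mathcomp Require Import all_boot.
Set Implicit Arguments. Unset Strict Implicit. Unset Printing Implicit Defensive.

(* A finite simple undirected graph: vertex type T : finType, adjacency
   relation e : rel T, symmetric and irreflexive. V = [set: T], n = #|T|. *)
Definition simple_graph (T : finType) (e : rel T) : Prop :=
  symmetric e /\ irreflexive e.

Definition graph_connected (T : finType) (e : rel T) : Prop :=
  forall x y : T, connect e x y.

Definition non_complete (T : finType) (e : rel T) : Prop :=
  exists x y : T, x != y /\ ~~ e x y.

Definition removed_rel (T : finType) (e : rel T) (U : {set T}) : rel T :=
  fun x y => [&& x \notin U, y \notin U & e x y].

Definition is_cut (T : finType) (e : rel T) (U : {set T}) : Prop :=
  exists x y : T, [/\ x \notin U, y \notin U & ~~ connect (removed_rel e U) x y].

Definition vertex_connectivity (T : finType) (e : rel T) (k : nat) : Prop :=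
  (exists U : {set T}, is_cut e U /\ #|U| = k) /\
  (forall U : {set T}, is_cut e U -> k <= #|U|).

Definition kcut (T : finType) (e : rel T) (k : nat) (U : {set T}) : Prop :=
  is_cut e U /\ #|U| = k.

(* Side_U(x): the component of G - U containing x (for x \notin U) *)
Definition Side (T : finType) (e : rel T) (U : {set T}) (x : T) : {set T} :=
  [set y | (y \notin U) && connect (removed_rel e U) x y].

From mathcomp Require Import all_boot zify.
From Stdlib Require Import Classical.
Set Implicit Arguments. Unset Strict Implicit.

(* Write N(A) for the set of vertices outside A adjacent to A.
   Every side C = Side_U(u) of a cut U satisfies N(C) ⊆ U, and so does the
   "far side" R = V \ (C ∪ U).  Conversely N(A) is a cut as soon as some
   vertex lies outside A ∪ N(A); hence a κ-cut U is determined by its side: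
   U = N(Side_U(u)).
   The heart of the proof is a crossing argument: for two κ-cuts U1, U2 whose
   u-sides C1, C2 have at most t ≤ ⌈(n-κ)/2⌉ vertices, N(C1 ∩ C2) is again a
   κ-cut.  Its size is at most |U1∩C2| + |U1∩U2| + |U2∩C1|; this is ≤ κ by
   counting when the far sides R1, R2 are disjoint (this is where the bound on
   t is used), and by comparison with the cut N(R1 ∩ R2) otherwise.
   The theorem follows: a small κ-cut S whose side has minimum size satisfies
   Side_S(u) ⊆ Side_U(u) for every small κ-cut U (cross S with U and use
   minimality), and it is unique because cuts are determined by their sides. *)

Lemma ex_minimizer (A : Type) (P : A -> Prop) (f : A -> nat) :
  (exists a, P a) -> exists a, P a /\ forall b, P b -> f a <= f b.
Proof.
case=> a0 Pa0.
suff min_below : forall n a, P a -> f a <= n ->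
    exists a, P a /\ forall b, P b -> f a <= f b by exact: (min_below _ a0).
elim=> [|n IHn] a Pa fa_le.
  by exists a; split=> // b _; move: fa_le; rewrite leqn0 => /eqP ->.
case: (classic (exists b, P b /\ f b < f a)) => [[b [Pb fb_lt]] | no_smaller].
  by apply: (IHn b Pb); rewrite -ltnS (leq_trans fb_lt).
exists a; split=> // b Pb; rewrite leqNgt; apply/negP => fb_lt.
by apply: no_smaller; exists b.
Qed.

Lemma connect_stays (T : finType) (r : rel T) (A : {set T}) x y :
  (forall z w, z \in A -> r z w -> w \in A) -> x \in A -> connect r x y -> y \in A.
Proof.
move=> closedA xA /connectP [p]; elim: p x xA => [|z p IHp] x xA /=.
  by move=> _ ->.
by case/andP=> rxz; apply: IHp; apply: closedA rxz.
Qed.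

Section Neighbourhoods.
Variables (T : finType) (e : rel T).
Hypothesis e_sym : symmetric e.

Definition Nb (A : {set T}) : {set T} :=
  [set y | (y \notin A) && [exists x in A, e x y]].

Definition far_side (U : {set T}) (x : T) : {set T} := ~: (Side e U x :|: U).

Definition small_kcut (kappa t : nat) (u : T) (U : {set T}) : Prop :=
  [/\ kcut e kappa U, u \notin U & #|Side e U u| <= t].

Lemma Side_self (U : {set T}) x : x \notin U -> x \in Side e U x.
Proof. by move=> xU; rewrite inE xU connect0. Qed.

Lemma Side_notin (U : {set T}) x y : y \in Side e U x -> y \notin U.
Proof. by rewrite inE => /andP []. Qed.

Lemma Side_disjoint (U : {set T}) x : [disjoint Side e U x & U].
Proof.
by rewrite disjoints_subset; apply/subsetP => y /Side_notin; rewrite inE.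
Qed.

Lemma in_far_side (U : {set T}) x y :
  (y \in far_side U x) = (y \notin Side e U x) && (y \notin U).
Proof. by rewrite in_setC in_setU negb_or. Qed.

Lemma Side_edge (U : {set T}) x z y :
  z \in Side e U x -> y \notin U -> e z y -> y \in Side e U x.
Proof.
rewrite !inE => /andP [zU x_to_z] yU ezy; rewrite yU.
by apply: connect_trans x_to_z (connect1 _); rewrite /removed_rel zU yU ezy.
Qed.

Lemma Nb_Side_sub (U : {set T}) x : Nb (Side e U x) \subset U.
Proof.
apply/subsetP => y; rewrite inE => /andP [yC /existsP [z /andP [zC ezy]]].
by apply: contraR yC => yU; apply: Side_edge zC yU ezy.
Qed.

Lemma Nb_far_side_sub (U : {set T}) x : Nb (far_side U x) \subset U.
Proof.
apply/subsetP => y; rewrite inE in_far_side negb_and !negbK.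
case/andP=> /orP [yC|//] /existsP [z /andP [zR ezy]].
move: zR; rewrite in_far_side => /andP [zC zU].
by rewrite (Side_edge yC zU _) // e_sym in zC.
Qed.

Lemma Side_Nb_sub (A : {set T}) x : x \in A -> Side e (Nb A) x \subset A.
Proof.
move=> xA; apply/subsetP => y; rewrite inE => /andP [_]; apply: connect_stays xA.
move=> z w zA /and3P [_ wN ezw]; apply: contraTT wN => wA.
by rewrite negbK inE wA; apply/existsP; exists z; rewrite zA.
Qed.

Lemma Nb_cut (A : {set T}) x y :
  x \in A -> y \notin A -> y \notin Nb A -> is_cut e (Nb A).
Proof.
move=> xA yA yN; exists x, y; split=> //; first by rewrite inE xA.
apply/negP => x_to_y; move/negP: yA; apply.
by apply: (subsetP (Side_Nb_sub xA)); rewrite inE yN.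
Qed.

Lemma conn_removed_sym (U : {set T}) x y :
  connect (removed_rel e U) x y = connect (removed_rel e U) y x.
Proof.
by apply: sym_connect_sym => z w; rewrite /removed_rel e_sym andbCA.
Qed.

Lemma far_side_nonempty (U : {set T}) x :
  is_cut e U -> x \notin U -> exists y, y \in far_side U x.
Proof.
case=> [p [q [pU qU p_not_q]]] xU.
case pC: (p \in Side e U x); last by exists p; rewrite in_far_side pC pU.
exists q; rewrite in_far_side qU andbT inE qU /=; apply: contra p_not_q => x_to_q.
move: pC; rewrite inE pU /= => x_to_p.
by apply: connect_trans x_to_q; rewrite conn_removed_sym.
Qed.

(* A κ-cut is the neighbourhood of each of its sides (minimality of κ). *)
Lemma kcut_eq_Nb_Side kappa (U : {set T}) x :
  vertex_connectivity e kappa -> kcut e kappa U -> x \notin U ->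
  U = Nb (Side e U x).
Proof.
move=> [_ kappa_min] [cutU cardU] xU; have sub := Nb_Side_sub U x.
have [y] := far_side_nonempty cutU xU; rewrite in_far_side => /andP [yC yU].
have yN : y \notin Nb (Side e U x) by apply: contra yU; apply: (subsetP sub).
have := kappa_min _ (Nb_cut (Side_self xU) yC yN).
by move=> le_card; apply/eqP; rewrite eq_sym eqEcard sub cardU.
Qed.

Lemma card_partition (X U : {set T}) x :
  #|X :&: Side e U x| + #|X :&: U| + #|X :&: far_side U x| = #|X|.
Proof.
rewrite /far_side -setDE -(cardsID (Side e U x :|: U) X) setIUr.
have := cardsUI (X :&: Side e U x) (X :&: U).
rewrite setIACA setIid (disjoint_setI0 (Side_disjoint U x)) setI0 cards0; lia.
Qed.

Lemma Nb_meet_sub (X Y U1 U2 : {set T}) :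
  Nb X \subset U1 -> Nb Y \subset U2 ->
  Nb (X :&: Y) \subset (U1 :&: Y) :|: (U1 :&: U2) :|: (U2 :&: X).
Proof.
move=> /subsetP NbX /subsetP NbY; apply/subsetP => y.
rewrite inE in_setI negb_and => /andP [yXY /existsP [z /andP [zXY ezy]]].
move: zXY; rewrite in_setI => /andP [zX zY].
have XU1 : y \notin X -> y \in U1.
  by move=> yX; apply: NbX; rewrite inE yX; apply/existsP; exists z; rewrite zX.
have YU2 : y \notin Y -> y \in U2.
  by move=> yY; apply: NbY; rewrite inE yY; apply/existsP; exists z; rewrite zY.
rewrite !in_setU !in_setI; case: (boolP (y \in X)) => [yX | /XU1 ->].
  by rewrite (YU2 _) ?yX ?orbT //; move: yXY; rewrite yX.
by case: (boolP (y \in Y)) => [yY | /YU2 ->]; rewrite ?yY ?orbT.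
Qed.

Lemma card_Nb_meet (X Y U1 U2 : {set T}) :
  Nb X \subset U1 -> Nb Y \subset U2 ->
  #|Nb (X :&: Y)| <= #|U1 :&: Y| + #|U1 :&: U2| + #|U2 :&: X|.
Proof.
move=> NbX NbY; apply: leq_trans (subset_leq_card (Nb_meet_sub NbX NbY)) _.
apply: leq_trans (leq_card_setU _ _) _; rewrite leq_add2r.
exact: leq_card_setU.
Qed.

Section Crossing.
Variables (kappa t : nat) (u : T) (U1 U2 : {set T}).
Hypothesis vc : vertex_connectivity e kappa.
Hypothesis t_le : 2 * t <= #|T| - kappa + 1.
Hypotheses (small1 : small_kcut kappa t u U1) (small2 : small_kcut kappa t u U2).

Local Notation C1 := (Side e U1 u).
Local Notation C2 := (Side e U2 u).
Local Notation R1 := (far_side U1 u).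
Local Notation R2 := (far_side U2 u).

(* If the far sides do not meet, sizes alone bound |N(C1 ∩ C2)|. *)
Lemma corner_bound_disjoint_far : R1 :&: R2 = set0 -> #|Nb (C1 :&: C2)| <= kappa.
Proof.
case: small1 small2 => [[_ card1] uU1 size1] [[_ card2] uU2 size2] far_disj.
have bound := card_Nb_meet (Nb_Side_sub U1 u) (Nb_Side_sub U2 u).
have partU2 := card_partition U2 U1 u.
have partC2 := card_partition C2 U1 u.
have partR1 := card_partition R1 U2 u.
have partT := card_partition [set: T] U1 u.
rewrite !setTI cardsT in partT; rewrite far_disj cards0 in partR1.
rewrite [U2 :&: U1]setIC in partU2; rewrite [R1 :&: U2]setIC in partR1.
rewrite [C2 :&: U1]setIC [C2 :&: R1]setIC in partC2.
have meet_pos : 0 < #|C2 :&: C1|.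
  by apply/card_gt0P; exists u; rewrite in_setI !Side_self.
lia.
Qed.

(* Otherwise N(R1 ∩ R2) is a cut, so has ≥ κ vertices, leaving ≤ κ for the other. *)
Lemma corner_bound_meeting_far : R1 :&: R2 != set0 -> #|Nb (C1 :&: C2)| <= kappa.
Proof.
case: small1 small2 => [[_ card1] uU1 _] [[_ card2] uU2 _] /set0Pn [b bR].
have bound := card_Nb_meet (Nb_Side_sub U1 u) (Nb_Side_sub U2 u).
have NbR := Nb_meet_sub (Nb_far_side_sub U1 u) (Nb_far_side_sub U2 u).
have uR : u \notin R1 :&: R2 by rewrite in_setI in_far_side Side_self.
have uNbR : u \notin Nb (R1 :&: R2).
  by apply/negP => /(subsetP NbR); rewrite !in_setU !in_setI (negbTE uU1) (negbTE uU2).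
have far_bound := leq_trans (vc.2 _ (Nb_cut bR uR uNbR))
  (card_Nb_meet (Nb_far_side_sub U1 u) (Nb_far_side_sub U2 u)).
have partU1 := card_partition U1 U2 u; have partU2 := card_partition U2 U1 u.
rewrite (setIC U2 U1) in partU2; lia.
Qed.

Lemma crossing_kcut :
  exists W, [/\ kcut e kappa W, u \notin W & Side e W u \subset C1 :&: C2].
Proof.
have corner_bound : #|Nb (C1 :&: C2)| <= kappa.
  case: (eqVneq (R1 :&: R2) set0).
    exact: corner_bound_disjoint_far.
  exact: corner_bound_meeting_far.
case: small1 small2 => [[cut1 _] uU1 _] [_ uU2 _].
have uC : u \in C1 :&: C2 by rewrite in_setI !Side_self.
have [y] := far_side_nonempty cut1 uU1; rewrite in_far_side => /andP [yC1 yU1].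
have yC : y \notin C1 :&: C2 by rewrite in_setI (negbTE yC1).
have yN : y \notin Nb (C1 :&: C2).
  apply/negP => /(subsetP (Nb_meet_sub (Nb_Side_sub U1 u) (Nb_Side_sub U2 u))).
  by rewrite !in_setU !in_setI (negbTE yU1) (negbTE yC1) !andbF.
have cutN := Nb_cut uC yC yN.
exists (Nb (C1 :&: C2)); split; last exact: Side_Nb_sub.
- by split=> //; apply/eqP; rewrite eqn_leq corner_bound (vc.2 _ cutN).
- by rewrite inE uC.
Qed.

End Crossing.

Lemma minimal_Side_sub kappa t u (S : {set T}) :
  vertex_connectivity e kappa -> 2 * t <= #|T| - kappa + 1 ->
  small_kcut kappa t u S ->
  (forall U, small_kcut kappa t u U -> #|Side e S u| <= #|Side e U u|) ->
  forall U, small_kcut kappa t u U -> Side e S u \subset Side e U u.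
Proof.
move=> vc t_le smallS minS U smallU.
have [W [kW uW subW]] := crossing_kcut vc t_le smallS smallU.
have subWS : Side e W u \subset Side e S u := subset_trans subW (subsetIl _ _).
have smallW : small_kcut kappa t u W.
  by split=> //; apply: leq_trans (subset_leq_card subWS) _; case: smallS.
have eqWS : Side e W u = Side e S u.
  by apply/eqP; rewrite eqEcard subWS (minS _ smallW).
by rewrite -eqWS; apply: subset_trans subW (subsetIr _ _).
Qed.

End Neighbourhoods.

Theorem theorem6 (T : finType) (e : rel T) (kappa : nat) (u : T) (t : nat) :
  simple_graph e -> graph_connected e -> non_complete e ->
  vertex_connectivity e kappa -> 4 * kappa < #|T| ->
  0 < t -> t <= (#|T| - kappa).+1 %/ 2 ->
  (exists U : {set T}, [/\ kcut e kappa U, u \notin U & #|Side e U u| <= t]) ->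
  exists! S : {set T},
    [/\ kcut e kappa S, u \notin S, #|Side e S u| <= t &
      forall U : {set T}, kcut e kappa U -> u \notin U -> #|Side e U u| <= t ->
        Side e S u \subset Side e U u].
Proof.
move=> [e_sym _] _ _ vc _ _ t_le ex_small.
have t_le2 : 2 * t <= #|T| - kappa + 1 by lia.
have [S [smallS minS]] :=
  ex_minimizer (fun U => #|Side e U u|) (ex_small : exists U, small_kcut e kappa t u U).
have least := minimal_Side_sub e_sym vc t_le2 smallS minS.
case: (smallS) => kS uS sizeS.
exists S; split=> [|S' [kS' uS' sizeS' leastS']].
  by split=> // U kU uU sizeU; apply: least.
rewrite (kcut_eq_Nb_Side e_sym vc kS uS) (kcut_eq_Nb_Side e_sym vc kS' uS').
by congr Nb; apply/eqP; rewrite eqEsubset leastS' // least.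
Qed.
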